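(* Let $S^t$ ($t\ge 0$) be a continuous semidynamical system on a complete metric space $(X,d)$. Assume that for some $h>0$ and every bounded set $A\subset X$ the set $A(h)$ is either empty or precompact. Suppose there exist two disjoint compact invariant sets $K_1,K_2\subset X$ such that $d(S^tx,K_2)\to 0$ as $t\to+\infty$ for every $x\in X\setminus K_1$. If the set $F_\varepsilon=\{x\in X: d(x,K_1)=\varepsilon\}$ is nonempty for every sufficiently small $\varepsilon>0$, then there exists at least one complete orbit $\psi$ of $S^t$ with $\alpha(\psi)\subset K_1$ and $\omega(\psi)\subset K_2$.
   Context: For $A\subset X$ and $h>0$, $A(h)=\{x\in A:\ x=S^hz \text{ and } S^uz\in A \text{ for all } u\in[0,h], \text{ for some } z\in A\}$. A complete orbit is a continuous map $\psi:\mathbb{R}\to X$ with $S^a\psi(t)=\psi(t+a)$ for all $a\ge0$, $t\in\mathbb{R}$. Its $\alpha$-limit set is $\alpha(\psi)=\bigcap_{q\le 0}\overline{\{\psi(s):s\le q\}}$ and its $\omega$-limit set is $\omega(\psi)=\bigcap_{q\ge0}\overline{\{\psi(s):s\ge q\}}$. *)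

From Stdlib Require Import Reals.
Open Scope R_scope.

Section MetricDefs.
Context {X : Type} (d : X -> X -> R).

Definition is_metric : Prop :=
  (forall x y, 0 <= d x y) /\
  (forall x y, d x y = 0 <-> x = y) /\
  (forall x y, d x y = d y x) /\
  (forall x y z, d x z <= d x y + d y z).

Definition seq_cvg (u : nat -> X) (x : X) : Prop :=
  forall e, 0 < e -> exists N, forall n, (N <= n)%nat -> d (u n) x < e.

Definition cauchy_seq (u : nat -> X) : Prop :=
  forall e, 0 < e -> exists N, forall m n, (N <= m)%nat -> (N <= n)%nat ->
    d (u m) (u n) < e.

Definition complete_space : Prop :=
  forall u : nat -> X, cauchy_seq u -> exists x, seq_cvg u x.

Definition subseq (phi : nat -> nat) : Prop :=
  forall n, (phi n < phi (S n))%nat.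

(* (sequential) compactness, equivalent to compactness in metric spaces *)
Definition seq_compact (K : X -> Prop) : Prop :=
  forall u : nat -> X, (forall n, K (u n)) ->
    exists phi x, subseq phi /\ K x /\ seq_cvg (fun n => u (phi n)) x.

Definition mclosure (E : X -> Prop) (x : X) : Prop :=
  forall e, 0 < e -> exists y, E y /\ d x y < e.

Definition precompact (A : X -> Prop) : Prop := seq_compact (mclosure A).

Definition bounded_set (A : X -> Prop) : Prop :=
  exists x0 r, forall x, A x -> d x0 x <= r.

Definition is_inf (E : R -> Prop) (r : R) : Prop :=
  (forall y, E y -> r <= y) /\
  (forall r', (forall y, E y -> r' <= y) -> r' <= r).

Definition dist_set_eq (x : X) (A : X -> Prop) (r : R) : Prop :=
  is_inf (fun y => exists a, A a /\ y = d x a) r.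

Definition dist_to_set_tends_to_0 (f : R -> X) (A : X -> Prop) : Prop :=
  forall e, 0 < e -> exists T, forall t, T <= t ->
    exists a, A a /\ d (f t) a < e.

End MetricDefs.

Section Semiflow.
Context {X : Type} (d : X -> X -> R) (S : R -> X -> X).

(* continuous semidynamical system S^t, t >= 0 (values of S at t < 0 are
   irrelevant); continuity is joint continuity of (t,x) |-> S^t x on
   [0,+oo) x X *)
Definition continuous_semiflow : Prop :=
  (forall x, S 0 x = x) /\
  (forall t s x, 0 <= t -> 0 <= s -> S (t + s) x = S t (S s x)) /\
  (forall t x e, 0 <= t -> 0 < e -> exists delta, 0 < delta /\
     forall t' y, 0 <= t' -> Rabs (t' - t) < delta -> d x y < delta ->
       d (S t x) (S t' y) < e).

Definition A_h (A : X -> Prop) (h : R) (x : X) : Prop :=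
  A x /\ exists z, A z /\ x = S h z /\ (forall u, 0 <= u <= h -> A (S u z)).

Definition invariant (K : X -> Prop) : Prop :=
  forall t, 0 <= t -> forall y, K y <-> exists x, K x /\ y = S t x.

Definition complete_orbit (psi : R -> X) : Prop :=
  (forall t e, 0 < e -> exists delta, 0 < delta /\
     forall s, Rabs (s - t) < delta -> d (psi t) (psi s) < e) /\
  (forall a t, 0 <= a -> S a (psi t) = psi (t + a)).

Definition alpha_limit (psi : R -> X) (x : X) : Prop :=
  forall q, q <= 0 -> mclosure d (fun y => exists s, s <= q /\ y = psi s) x.

Definition omega_limit (psi : R -> X) (x : X) : Prop :=
  forall q, 0 <= q -> mclosure d (fun y => exists s, q <= s /\ y = psi s) x.

End Semiflow.

From Stdlib Require Import Reals Lra Lia Classical IndefiniteDescription.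
Open Scope R_scope.

(* Let D be the distance to K1 and fix eps > 0 below the minimum of D on K2.
   Take x_n with 0 < D(x_n) < eps and D(x_n) -> 0.  Being attracted to K2, the
   orbit of x_n leaves {D <= eps} at a first exit time t_n, and t_n -> +oo
   because orbits starting close to the compact invariant set K1 stay close to
   it on bounded time intervals.  For fixed s >= 0 the points S^(t_n - s) x_n
   eventually lie in A(h) for A = {D <= eps}, which is bounded, so they
   accumulate; a diagonal extraction over s = 0, h, 2h, ... produces z_m with
   S^h z_(m+1) = z_m, D(z_0) = eps and D <= eps along the orbit segments, and
   these glue into a complete orbit.  Its past stays in {D <= eps}, while every
   point off K1 is eventually pushed beyond eps, so the alpha-limit set lies in
   K1; it starts off K1, so the omega-limit set lies in K2. *)

Lemma inv_INR_succ_small e : 0 < e -> exists N : nat, forall n, (N <= n)%nat -> / (INR n + 1) < e.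
Proof.
  intros He. destruct (INR_archimed 1 (/ e)) as [N HN]; [lra|].
  exists N. intros n Hn. apply le_INR in Hn.
  assert (0 < / e) by (apply Rinv_0_lt_compat; lra).
  rewrite <- (Rinv_inv e). apply Rinv_lt_contravar; [|lra].
  apply Rmult_lt_0_compat; lra.
Qed.

Lemma nat_dependent_choice {A : Type} (P : nat -> A -> Prop) (Rel : A -> A -> Prop) (a0 : A) :
  P 0%nat a0 -> (forall m a, P m a -> exists a', P (S m) a' /\ Rel a a') ->
  exists f : nat -> A, forall m, P m (f m) /\ Rel (f m) (f (S m)).
Proof.
  intros H0 Hstep.
  assert (Hnext : forall p : nat * A, exists a',
    P (fst p) (snd p) -> P (S (fst p)) a' /\ Rel (snd p) a').
  { intros [m a]. simpl. destruct (classic (P m a)) as [Hp|Hp].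
    - destruct (Hstep m a Hp) as [a' Ha']. exists a'. auto.
    - exists a. intros Hp'. contradiction. }
  destruct (functional_choice _ Hnext) as [next Hnext'].
  set (f := nat_rect (fun _ => A) a0 (fun m a => next (m, a))).
  assert (Hf : forall m, P m (f m)).
  { induction m as [|m IH]; [exact H0|]. exact (proj1 (Hnext' (m, f m) IH)). }
  exists f. intros m. split; [apply Hf|]. exact (proj2 (Hnext' (m, f m) (Hf m))).
Qed.

Lemma subseq_extract (P : nat -> nat -> Prop) :
  (forall k N, exists n, (N <= n)%nat /\ P k n) ->
  exists phi, subseq phi /\ forall k, P k (phi k).
Proof.
  intros H. destruct (H 0%nat 0%nat) as [n0 [_ Hn0]].
  destruct (nat_dependent_choice P (fun n n' => (n < n')%nat) n0 Hn0) as [phi Hphi].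
  { intros m n _. destruct (H (S m) (S n)) as [n' [Hn' HP]]. exists n'. split; [exact HP|lia]. }
  exists phi. split; intros k; apply Hphi.
Qed.

Lemma subseq_le phi : subseq phi -> forall n m, (n <= m)%nat -> (phi n <= phi m)%nat.
Proof.
  intros H n m Hnm. induction Hnm; [lia|]. specialize (H m). lia.
Qed.

Lemma subseq_ge_id phi : subseq phi -> forall n, (n <= phi n)%nat.
Proof.
  intros H n. induction n; [lia|]. specialize (H n). lia.
Qed.

Lemma subseq_comp phi psi : subseq phi -> subseq psi -> subseq (fun k => phi (psi k)).
Proof.
  intros H1 H2 n. specialize (H2 n).
  assert (phi (S (psi n)) <= phi (psi (S n)))%nat by (apply subseq_le; auto).
  specialize (H1 (psi n)). lia.
Qed.

Lemma bounded_seq_cvg_subseq (u : nat -> R) (a b : R) : (forall n, a <= u n <= b) ->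
  exists phi l, subseq phi /\ a <= l <= b /\
    forall e, 0 < e -> exists N, forall k, (N <= k)%nat -> Rabs (u (phi k) - l) < e.
Proof.
  intros Hu. destruct (Bolzano_Weierstrass u _ (compact_P3 a b) Hu) as [l Hl].
  assert (Hfreq : forall k N, exists n, (N <= n)%nat /\ Rabs (u n - l) < / (INR k + 1)).
  { intros k N. set (r := mkposreal _ (RinvN_pos k)).
    destruct (Hl (disc l r) N) as [p [Hp1 Hp2]].
    - exists r. intros y Hy. exact Hy.
    - exists p. split; auto. }
  destruct (subseq_extract _ Hfreq) as [phi [Hphi Hc]].
  assert (Hcv : forall e, 0 < e -> exists N, forall k, (N <= k)%nat -> Rabs (u (phi k) - l) < e).
  { intros e He. destruct (inv_INR_succ_small e He) as [N HN]. exists N. intros k Hk.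
    eapply Rlt_trans; [apply Hc|apply HN; auto]. }
  exists phi, l. repeat split; auto.
  - apply Rnot_lt_le. intros H. destruct (Hcv (a - l)) as [N HN]; [lra|].
    specialize (HN N (le_n _)). specialize (Hu (phi N)). apply Rabs_def2 in HN. lra.
  - apply Rnot_lt_le. intros H. destruct (Hcv (l - b)) as [N HN]; [lra|].
    specialize (HN N (le_n _)). specialize (Hu (phi N)). apply Rabs_def2 in HN. lra.
Qed.

Lemma first_crossing (g : R -> R) (c T : R) :
  (forall t e, 0 <= t -> 0 < e -> exists delta, 0 < delta /\
     forall t', 0 <= t' -> Rabs (t' - t) < delta -> Rabs (g t' - g t) < e) ->
  g 0 < c -> 0 <= T -> c < g T ->
  exists tau, 0 <= tau /\ g tau = c /\ forall s, 0 <= s <= tau -> g s <= c.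
Proof.
  intros Hg H0 HT0 HT.
  set (below := fun t => 0 <= t /\ forall s, 0 <= s <= t -> g s < c).
  assert (Hbound : bound below).
  { exists T. intros t [Ht Hs]. apply Rnot_lt_le. intros H. specialize (Hs T ltac:(lra)). lra. }
  assert (Hbelow0 : below 0).
  { split; [lra|]. intros s Hs. replace s with 0 by lra. exact H0. }
  destruct (completeness below Hbound (ex_intro _ 0 Hbelow0)) as [tau [Hub Hlub]].
  assert (Htau0 : 0 <= tau) by (apply Hub; exact Hbelow0).
  assert (Hbefore : forall s, 0 <= s < tau -> g s < c).
  { intros s Hs. apply NNPP. intros Hn. assert (tau <= s); [|lra].
    apply Hlub. intros t [_ Ht]. apply Rnot_lt_le. intros H. apply Hn, Ht. lra. }
  assert (Hle : g tau <= c).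
  { apply Rnot_lt_le. intros Habove.
    destruct (Hg tau (g tau - c)) as [eta [Heta Hc]]; [lra|lra|].
    destruct (Req_dec tau 0) as [E|E]; [rewrite E in Habove; lra|].
    set (s := Rmax 0 (tau - eta / 2)).
    assert (0 <= s) by apply Rmax_l.
    assert (s < tau) by (apply Rmax_lub_lt; lra).
    assert (tau - eta / 2 <= s) by apply Rmax_r.
    specialize (Hc s ltac:(lra) ltac:(apply Rabs_def1; lra)).
    specialize (Hbefore s ltac:(lra)). apply Rabs_def2 in Hc. lra. }
  assert (Hge : c <= g tau).
  { apply Rnot_lt_le. intros H.
    destruct (Hg tau (c - g tau)) as [eta [Heta Hc]]; [lra|lra|].
    assert (Hbelow : below (tau + eta / 2)).
    { split; [lra|]. intros s Hs. destruct (Rlt_or_le s tau) as [H1|H1]; [apply Hbefore; lra|].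
      specialize (Hc s ltac:(lra) ltac:(apply Rabs_def1; lra)). apply Rabs_def2 in Hc. lra. }
    specialize (Hub _ Hbelow). lra. }
  exists tau. split; [exact Htau0|]. split; [lra|]. intros s Hs.
  destruct (Rlt_or_le s tau) as [H1|H1]; [left; apply Hbefore; lra|].
  replace s with tau by lra. exact Hle.
Qed.
Section Metric.
Context {X : Type} (d : X -> X -> R) (Hm : is_metric d).

Lemma d_ge0 x y : 0 <= d x y. Proof. exact (proj1 Hm x y). Qed.
Lemma d_xx x : d x x = 0. Proof. exact (proj2 (proj1 (proj2 Hm) x x) eq_refl). Qed.
Lemma d_eq0 x y : d x y = 0 -> x = y. Proof. exact (proj1 (proj1 (proj2 Hm) x y)). Qed.
Lemma d_sym x y : d x y = d y x. Proof. exact (proj1 (proj2 (proj2 Hm)) x y). Qed.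
Lemma d_tri x y z : d x z <= d x y + d y z. Proof. exact (proj2 (proj2 (proj2 Hm)) x y z). Qed.

Lemma seq_cvg_subseq u x phi : subseq phi -> seq_cvg d u x -> seq_cvg d (fun k => u (phi k)) x.
Proof.
  intros Hphi Hu e He. destruct (Hu e He) as [N HN]. exists N. intros n Hn.
  apply HN. pose proof (subseq_ge_id _ Hphi n). lia.
Qed.

Lemma seq_cvg_eventually_eq u v x :
  (exists N, forall n, (N <= n)%nat -> u n = v n) -> seq_cvg d u x -> seq_cvg d v x.
Proof.
  intros [N0 Heq] Hu e He. destruct (Hu e He) as [N HN]. exists (N0 + N)%nat. intros n Hn.
  rewrite <- Heq by lia. apply HN. lia.
Qed.

Lemma seq_cvg_unique u x y : seq_cvg d u x -> seq_cvg d u y -> x = y.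
Proof.
  intros Hx Hy. apply d_eq0, Rle_antisym; [|apply d_ge0].
  apply Rle_plus_epsilon. intros e He.
  destruct (Hx (e / 2)) as [N1 HN1]; [lra|]. destruct (Hy (e / 2)) as [N2 HN2]; [lra|].
  specialize (HN1 (N1 + N2)%nat ltac:(lia)). specialize (HN2 (N1 + N2)%nat ltac:(lia)).
  pose proof (d_tri x (u (N1 + N2)%nat) y). rewrite d_sym in HN1. lra.
Qed.

Lemma seq_cvg_mclosure_tail u x N : seq_cvg d u x ->
  mclosure d (fun y => exists n, (N <= n)%nat /\ y = u n) x.
Proof.
  intros Hu e He. destruct (Hu e He) as [N' HN']. exists (u (N + N')%nat). split.
  - exists (N + N')%nat. split; [lia|reflexivity].
  - rewrite d_sym. apply HN'. lia.
Qed.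

Lemma seq_compact_closed K x : seq_compact d K -> mclosure d K x -> K x.
Proof.
  intros HK Hx.
  assert (Hnear : forall n : nat, exists a, K a /\ d x a < / (INR n + 1))
    by (intros n; apply Hx, RinvN_pos).
  destruct (functional_choice _ Hnear) as [a Ha].
  destruct (HK a (fun n => proj1 (Ha n))) as [phi [y [Hphi [Ky Hcv]]]].
  replace x with y; [exact Ky|]. apply (seq_cvg_unique (fun k => a (phi k))); [exact Hcv|].
  intros e He. destruct (inv_INR_succ_small e He) as [N HN]. exists N. intros n Hn.
  rewrite d_sym. apply Rlt_trans with (/ (INR (phi n) + 1)); [apply Ha|].
  apply HN. pose proof (subseq_ge_id _ Hphi n). lia.
Qed.

Lemma seq_compact_bounded K x0 : seq_compact d K -> exists r, forall a, K a -> d x0 a <= r.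
Proof.
  intros HK. apply NNPP. intros Hn.
  assert (Hfar : forall n : nat, exists a, K a /\ INR n < d x0 a).
  { intros n. apply NNPP. intros H1. apply Hn. exists (INR n). intros a Ka.
    apply Rnot_lt_le. intros H2. apply H1. eauto. }
  destruct (functional_choice _ Hfar) as [a Ha].
  destruct (HK a (fun n => proj1 (Ha n))) as [phi [y [Hphi [Ky Hcv]]]].
  destruct (Hcv 1) as [N HN]; [lra|].
  destruct (INR_archimed 1 (d x0 y + 1)) as [M HM]; [lra|].
  specialize (HN (N + M)%nat ltac:(lia)).
  pose proof (proj2 (Ha (phi (N + M)%nat))).
  assert (INR M <= INR (phi (N + M)%nat)).
  { apply le_INR. pose proof (subseq_ge_id _ Hphi (N + M)%nat). lia. }
  pose proof (d_tri x0 y (a (phi (N + M)%nat))). rewrite (d_sym y) in *. lra.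
Qed.

Definition real_continuous_at (f : X -> R) (x : X) : Prop :=
  forall e, 0 < e -> exists delta, 0 < delta /\
    forall y, d x y < delta -> Rabs (f y - f x) < e.

Lemma mclosure_le (f : X -> R) E x c : real_continuous_at f x -> mclosure d E x ->
  (forall w, E w -> f w <= c) -> f x <= c.
Proof.
  intros Hf Hx Hc. apply Rnot_lt_le. intros Hlt.
  destruct (Hf (f x - c)) as [delta [Hdelta Hnear]]; [lra|].
  destruct (Hx delta Hdelta) as [w [Ew Hw]].
  specialize (Hnear w Hw). specialize (Hc w Ew). apply Rabs_def2 in Hnear. lra.
Qed.

Lemma mclosure_ge (f : X -> R) E x c : real_continuous_at f x -> mclosure d E x ->
  (forall w, E w -> c <= f w) -> c <= f x.
Proof.
  intros Hf Hx Hc. apply Ropp_le_cancel.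
  apply (mclosure_le (fun w => - f w) E); [|exact Hx|intros w Ew; apply Ropp_le_contravar, Hc, Ew].
  intros e He. destruct (Hf e He) as [delta [Hdelta Hnear]]. exists delta. split; [exact Hdelta|].
  intros y Hy. rewrite <- Rabs_Ropp. replace (- (- f y - - f x)) with (f y - f x) by ring.
  apply Hnear, Hy.
Qed.

End Metric.

Section DistToSet.
Context {X : Type} (d : X -> X -> R) (Hm : is_metric d) (K : X -> Prop).

Lemma dist_set_eq_nonempty x r : dist_set_eq d x K r -> exists a, K a.
Proof.
  intros [_ Hglb]. apply NNPP. intros Hempty.
  assert (r + 1 <= r); [|lra]. apply Hglb. intros y [a [Ka _]]. exfalso. eauto.
Qed.

Lemma dist_fun_exists : (exists a, K a) -> exists D : X -> R, forall x, dist_set_eq d x K (D x).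
Proof.
  intros [k0 Hk0]. apply (functional_choice (fun x r => dist_set_eq d x K r)). intros x.
  set (E := fun y => exists a, K a /\ y = - d x a).
  assert (HE : bound E).
  { exists 0. intros y [a [_ ->]]. pose proof (d_ge0 d Hm x a). lra. }
  destruct (completeness E HE (ex_intro _ (- d x k0) (ex_intro _ k0 (conj Hk0 eq_refl))))
    as [m [Hub Hlub]].
  exists (- m). split.
  - intros y [a [Ka ->]]. assert (- d x a <= m) by (apply Hub; exists a; auto). lra.
  - intros r Hr. assert (m <= - r); [|lra]. apply Hlub.
    intros y [a [Ka ->]]. assert (r <= d x a) by (apply Hr; exists a; auto). lra.
Qed.

Variable D : X -> R.
Hypothesis HD : forall x, dist_set_eq d x K (D x).

Lemma dist_le x a : K a -> D x <= d x a.
Proof. intros Ka. apply (proj1 (HD x)). eauto. Qed.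

Lemma dist_ge0 x : 0 <= D x.
Proof. apply (proj2 (HD x)). intros y [a [_ ->]]. apply d_ge0, Hm. Qed.

Lemma dist_approx x e : 0 < e -> exists a, K a /\ d x a < D x + e.
Proof.
  intros He. apply NNPP. intros Hn. assert (D x + e <= D x); [|lra].
  apply (proj2 (HD x)). intros y [a [Ka ->]]. apply Rnot_lt_le. intros H. apply Hn. eauto.
Qed.

Lemma dist_lip x y : D x <= D y + d x y.
Proof.
  apply Rle_plus_epsilon. intros e He. destruct (dist_approx y e He) as [a [Ka Ha]].
  pose proof (dist_le x a Ka). pose proof (d_tri d Hm x y a). lra.
Qed.

Lemma dist_lip_abs x y : Rabs (D y - D x) <= d x y.
Proof.
  pose proof (dist_lip x y). pose proof (dist_lip y x). rewrite (d_sym d Hm y x) in *.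
  apply Rabs_le. lra.
Qed.

Lemma dist_continuous x : real_continuous_at d D x.
Proof.
  intros e He. exists e. split; [exact He|]. intros y Hy.
  eapply Rle_lt_trans; [apply dist_lip_abs|exact Hy].
Qed.

Lemma dist_unique x r : dist_set_eq d x K r -> D x = r.
Proof.
  intros [H1 H2]. destruct (HD x) as [H3 H4]. apply Rle_antisym; auto.
Qed.

Lemma dist_in x : K x -> D x = 0.
Proof.
  intros Kx. pose proof (dist_le x x Kx) as Hle. rewrite (d_xx d Hm) in Hle.
  pose proof (dist_ge0 x). lra.
Qed.

Hypothesis HK : seq_compact d K.

Lemma dist_eq0 x : D x = 0 -> K x.
Proof.
  intros H0. apply (seq_compact_closed d Hm K x HK). intros e He.
  destruct (dist_approx x e He) as [a [Ka Ha]]. exists a. split; [exact Ka|lra].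
Qed.

Lemma dist_sublevel_bounded a0 c : K a0 -> bounded_set d (fun x => D x <= c).
Proof.
  intros Ka0. destruct (seq_compact_bounded d Hm K a0 HK) as [r Hr].
  exists a0, (r + c + 1). intros x Hx.
  destruct (dist_approx x 1) as [a [Ka Ha]]; [lra|].
  pose proof (Hr a Ka). pose proof (d_tri d Hm a0 a x). rewrite (d_sym d Hm a x) in *. lra.
Qed.

Lemma dist_pos_on_disjoint_compact K' : seq_compact d K' -> (forall x, ~ (K x /\ K' x)) ->
  exists delta, 0 < delta /\ forall b, K' b -> delta <= D b.
Proof.
  intros HK' Hdisj. apply NNPP. intros Hn.
  assert (Hclose : forall n : nat, exists b, K' b /\ D b < / (INR n + 1)).
  { intros n. apply NNPP. intros H1. apply Hn. exists (/ (INR n + 1)). split; [apply RinvN_pos|].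
    intros b Kb. apply Rnot_lt_le. intros H2. apply H1. eauto. }
  destruct (functional_choice _ Hclose) as [bs Hbs].
  destruct (HK' bs (fun n => proj1 (Hbs n))) as [phi [b [Hphi [Kb Hcv]]]].
  apply (Hdisj b). split; [|exact Kb].
  apply dist_eq0, Rle_antisym; [|apply dist_ge0].
  apply Rle_plus_epsilon. intros e He. destruct (inv_INR_succ_small e He) as [N HN].
  rewrite Rplus_0_l.
  apply (mclosure_le d D _ _ _ (dist_continuous b) (seq_cvg_mclosure_tail d Hm _ _ N Hcv)).
  intros w [n [Hn' ->]]. left. apply Rlt_trans with (/ (INR (phi n) + 1)); [apply Hbs|].
  apply HN. pose proof (subseq_ge_id _ Hphi n). lia.
Qed.

End DistToSet.

Lemma invariant_forward {X : Type} (flow : R -> X -> X) (K : X -> Prop) :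
  invariant flow K -> forall t a, 0 <= t -> K a -> K (flow t a).
Proof. intros HK t a Ht Ka. apply (HK t Ht). eauto. Qed.

Section Semiflow.
Context {X : Type} (d : X -> X -> R) (flow : R -> X -> X).
Hypothesis Hm : is_metric d.
Hypothesis Hsf : continuous_semiflow d flow.

Lemma flow_zero x : flow 0 x = x. Proof. exact (proj1 Hsf x). Qed.

Lemma flow_add t s x : 0 <= t -> 0 <= s -> flow (t + s) x = flow t (flow s x).
Proof. exact (proj1 (proj2 Hsf) t s x). Qed.

Lemma flow_cont t x e : 0 <= t -> 0 < e -> exists delta, 0 < delta /\
  forall t' y, 0 <= t' -> Rabs (t' - t) < delta -> d x y < delta -> d (flow t x) (flow t' y) < e.
Proof. exact (proj2 (proj2 Hsf) t x e). Qed.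

Lemma flow_seq_cvg u x t : 0 <= t -> seq_cvg d u x -> seq_cvg d (fun n => flow t (u n)) (flow t x).
Proof.
  intros Ht Hu e He. destruct (flow_cont t x e Ht He) as [delta [Hdelta Hc]].
  destruct (Hu delta Hdelta) as [N HN]. exists N. intros n Hn.
  rewrite d_sym by exact Hm. apply Hc; [exact Ht| |rewrite d_sym by exact Hm; apply HN, Hn].
  rewrite Rminus_diag, Rabs_R0. exact Hdelta.
Qed.

Section BackwardChain.
Variable h : R.
Hypothesis Hh : 0 < h.
Variable z : nat -> X.
Hypothesis Hz : forall m, flow h (z (S m)) = z m.

Lemma chain_shift j m : z m = flow (INR j * h) (z (m + j)%nat).
Proof.
  induction j as [|j IH].
  - rewrite Rmult_0_l, flow_zero, Nat.add_0_r. reflexivity.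
  - rewrite IH, <- (Hz (m + j)%nat), <- flow_add by (pose proof (pos_INR j); nra).
    rewrite Nat.add_succ_r, S_INR. f_equal. ring.
Qed.

Lemma chain_consistent t m m' : 0 <= t + INR m * h -> 0 <= t + INR m' * h ->
  flow (t + INR m * h) (z m) = flow (t + INR m' * h) (z m').
Proof.
  assert (Hstep : forall m j, 0 <= t + INR m * h ->
    flow (t + INR m * h) (z m) = flow (t + INR (m + j) * h) (z (m + j)%nat)).
  { intros m0 j Hm0. rewrite (chain_shift j m0), <- flow_add by (auto; pose proof (pos_INR j); nra).
    rewrite plus_INR. f_equal. ring. }
  intros Hm0 Hm0'. destruct (Nat.le_ge_cases m m') as [Hle|Hle].
  - replace m' with (m + (m' - m))%nat by lia. apply Hstep, Hm0.
  - replace m with (m' + (m - m'))%nat by lia. symmetry. apply Hstep, Hm0'.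
Qed.

Lemma complete_orbit_of_chain : exists psi : R -> X, complete_orbit d flow psi /\
  forall t m, 0 <= t + INR m * h -> psi t = flow (t + INR m * h) (z m).
Proof.
  assert (Hlarge : forall t, exists m, t < INR m * h).
  { intros t. destruct (INR_archimed h t Hh) as [m Hmh]. exists m. lra. }
  assert (Hpsi : forall t, exists p,
    forall m, 0 <= t + INR m * h -> p = flow (t + INR m * h) (z m)).
  { intros t. destruct (Hlarge (- t)) as [m0 Hm0]. exists (flow (t + INR m0 * h) (z m0)).
    intros m Hm'. apply chain_consistent; lra. }
  destruct (functional_choice _ Hpsi) as [psi Hpsi'].
  exists psi. split; [split|exact Hpsi'].
  - intros t e He. destruct (Hlarge (1 - t)) as [m Hm0].
    destruct (flow_cont (t + INR m * h) (z m) e) as [delta [Hdelta Hc]]; [lra|exact He|].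
    exists (Rmin delta 1). split; [apply Rmin_pos; lra|].
    intros s Hs. pose proof (Rmin_l delta 1). pose proof (Rmin_r delta 1).
    apply Rabs_def2 in Hs as Hs'.
    rewrite (Hpsi' t m), (Hpsi' s m) by lra. apply Hc; [lra| |rewrite (d_xx d Hm); lra].
    replace (s + INR m * h - (t + INR m * h)) with (s - t) by ring. lra.
  - intros a t Ha. destruct (Hlarge (- t)) as [m Hm0].
    rewrite (Hpsi' t m), (Hpsi' (t + a) m), <- flow_add by lra. f_equal. ring.
Qed.

End BackwardChain.

Section DistAlongFlow.
Variable K : X -> Prop.
Variable D : X -> R.
Hypothesis HD : forall x, dist_set_eq d x K (D x).

Lemma dist_flow_continuous u x : 0 <= u -> real_continuous_at d (fun w => D (flow u w)) x.
Proof.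
  intros Hu e He. destruct (flow_cont u x e Hu He) as [delta [Hdelta Hc]].
  exists delta. split; [exact Hdelta|]. intros y Hy.
  eapply Rle_lt_trans; [apply (dist_lip_abs d Hm K D HD)|].
  apply Hc; [exact Hu| |exact Hy]. rewrite Rminus_diag, Rabs_R0. exact Hdelta.
Qed.

Lemma dist_flow_continuous_time x t e : 0 <= t -> 0 < e -> exists delta, 0 < delta /\
  forall t', 0 <= t' -> Rabs (t' - t) < delta -> Rabs (D (flow t' x) - D (flow t x)) < e.
Proof.
  intros Ht He. destruct (flow_cont t x e Ht He) as [delta [Hdelta Hc]].
  exists delta. split; [exact Hdelta|]. intros t' Ht' Hdt.
  eapply Rle_lt_trans; [apply (dist_lip_abs d Hm K D HD)|].
  apply Hc; [exact Ht'|exact Hdt|]. rewrite (d_xx d Hm). exact Hdelta.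
Qed.

Hypothesis HK : seq_compact d K.
Hypothesis HKfwd : forall t a, 0 <= t -> K a -> K (flow t a).

Lemma dist_flow_small_uniform M e : 0 < e -> exists delta, 0 < delta /\
  forall x t, D x < delta -> 0 <= t <= M -> D (flow t x) < e.
Proof.
  intros He. apply NNPP. intros Hn.
  assert (Hbad : forall n : nat, exists p : X * R,
    D (fst p) < / (INR n + 1) /\ 0 <= snd p <= M /\ e <= D (flow (snd p) (fst p))).
  { intros n. apply NNPP. intros H1. apply Hn. exists (/ (INR n + 1)).
    split; [apply RinvN_pos|]. intros x t Hx Ht. apply Rnot_le_lt. intros H2.
    apply H1. exists (x, t). auto. }
  destruct (functional_choice _ Hbad) as [p Hp].
  assert (Hnear : forall n : nat, exists a, K a /\ d (fst (p n)) a < 2 * / (INR n + 1)).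
  { intros n. destruct (dist_approx d K D HD (fst (p n)) _ (RinvN_pos n)) as [a [Ka Ha]].
    exists a. split; [exact Ka|]. pose proof (proj1 (Hp n)). lra. }
  destruct (functional_choice _ Hnear) as [a Ha].
  destruct (HK a (fun n => proj1 (Ha n))) as [phi [a0 [Hphi [Ka0 Hcv]]]].
  destruct (bounded_seq_cvg_subseq (fun k => snd (p (phi k))) 0 M) as [rho [t0 [Hrho [Ht0 Hct]]]].
  { intros k. apply Hp. }
  destruct (flow_cont t0 a0 e) as [eta [Heta Hc]]; [lra|exact He|].
  destruct (seq_cvg_subseq d _ _ _ Hrho Hcv (eta / 2)) as [N1 HN1]; [lra|].
  destruct (Hct eta Heta) as [N2 HN2].
  destruct (inv_INR_succ_small (eta / 4)) as [N3 HN3]; [lra|].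
  set (k := (N1 + N2 + N3)%nat). set (n := phi (rho k)).
  assert (Hkn : (k <= n)%nat).
  { unfold n. pose proof (subseq_ge_id _ Hrho k). pose proof (subseq_ge_id _ Hphi (rho k)). lia. }
  specialize (HN1 k ltac:(unfold k; lia)). specialize (HN2 k ltac:(unfold k; lia)).
  specialize (HN3 n ltac:(unfold k in Hkn; lia)). fold n in HN1, HN2.
  assert (Hclose : d a0 (fst (p n)) < eta).
  { pose proof (d_tri d Hm a0 (a n) (fst (p n))). pose proof (proj2 (Ha n)).
    rewrite (d_sym d Hm (a n)) in *. lra. }
  specialize (Hc (snd (p n)) (fst (p n)) ltac:(apply Hp) HN2 Hclose).
  pose proof (dist_lip d Hm K D HD (flow (snd (p n)) (fst (p n))) (flow t0 a0)) as Hlip.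
  rewrite (dist_in d Hm K D HD _ (HKfwd t0 a0 ltac:(lra) Ka0)), (d_sym d Hm) in Hlip.
  pose proof (proj2 (proj2 (Hp n))). lra.
Qed.

End DistAlongFlow.

End Semiflow.

Section Heteroclinic.
Context {X : Type} (d : X -> X -> R) (flow : R -> X -> X) (h : R) (K1 K2 : X -> Prop).
Hypothesis Hm : is_metric d.
Hypothesis Hsf : continuous_semiflow d flow.
Hypothesis Hh : 0 < h.
Hypothesis HAh : forall A : X -> Prop, bounded_set d A ->
  (forall x, ~ A_h flow A h x) \/ precompact d (A_h flow A h).
Hypothesis HK1 : seq_compact d K1.
Hypothesis HK2 : seq_compact d K2.
Hypothesis Hinv1 : invariant flow K1.
Hypothesis Hdisj : forall x, ~ (K1 x /\ K2 x).
Hypothesis Hattr : forall x, ~ K1 x -> dist_to_set_tends_to_0 d (fun t => flow t x) K2.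
Variable D : X -> R.
Hypothesis HD : forall x, dist_set_eq d x K1 (D x).

Lemma omega_limit_in_K2 psi : complete_orbit d flow psi -> ~ K1 (psi 0) ->
  forall x, omega_limit d psi x -> K2 x.
Proof.
  intros [_ Hpsi] Hpsi0 x Hx. apply (seq_compact_closed d Hm K2 x HK2). intros e He.
  destruct (Hattr _ Hpsi0 (e / 2)) as [T HT]; [lra|].
  destruct (Hx (Rmax T 0) (Rmax_r _ _) (e / 2)) as [y [[s [Hs ->]] Hd]]; [lra|].
  pose proof (Rmax_l T 0). pose proof (Rmax_r T 0).
  destruct (HT s) as [a [Ka Ha]]; [lra|].
  exists a. split; [exact Ka|].
  rewrite <- (Rplus_0_l s), <- Hpsi in Hd by lra.
  pose proof (d_tri d Hm x (flow s (psi 0)) a). lra.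
Qed.

Section Sublevel.
Variables dl eps : R.
Hypothesis Hsep : forall b, K2 b -> dl <= D b.
Hypothesis Heps : 0 < eps.
Hypothesis Hepsdl : eps < dl.

Lemma leaves_sublevel x : ~ K1 x -> exists T, 0 <= T /\ eps < D (flow T x).
Proof.
  intros Hx. destruct (Hattr x Hx (dl - eps)) as [T0 HT0]; [lra|].
  exists (Rmax T0 0). split; [apply Rmax_r|].
  destruct (HT0 (Rmax T0 0) (Rmax_l _ _)) as [a [Ka Ha]].
  pose proof (Hsep a Ka). pose proof (dist_lip d Hm K1 D HD a (flow (Rmax T0 0) x)) as Hlip.
  rewrite (d_sym d Hm) in Hlip. lra.
Qed.

Lemma first_exit x : D x < eps -> ~ K1 x -> exists tau, 0 <= tau /\ D (flow tau x) = eps /\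
  forall s, 0 <= s <= tau -> D (flow s x) <= eps.
Proof.
  intros Hx HKx. destruct (leaves_sublevel x HKx) as [T [HT0 HT]].
  apply (first_crossing (fun t => D (flow t x)) eps T); [|cbv beta..|exact HT0|exact HT].
  - intros t e Ht He. exact (dist_flow_continuous_time d flow Hm Hsf K1 D HD x t e Ht He).
  - rewrite (flow_zero d flow Hsf). exact Hx.
Qed.

Lemma alpha_limit_in_K1 psi : complete_orbit d flow psi ->
  (forall t, t <= 0 -> D (psi t) <= eps) -> forall x, alpha_limit d psi x -> K1 x.
Proof.
  intros [_ Hpsi] Hpast x Hx. apply NNPP. intros HKx.
  destruct (leaves_sublevel x HKx) as [T [HT0 HT]].
  assert (D (flow T x) <= eps); [|lra].
  apply (mclosure_le d (fun w => D (flow T w)) _ x eps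
    (dist_flow_continuous d flow Hm Hsf K1 D HD T x HT0) (Hx (- T) ltac:(lra))).
  intros w [s [Hs ->]]. rewrite Hpsi by exact HT0. apply Hpast. lra.
Qed.

Section BackwardPoints.
Variables (xs : nat -> X) (ts : nat -> R).
Hypothesis Hxs : forall e, 0 < e -> exists N, forall n, (N <= n)%nat -> D (xs n) < e.
Hypothesis Hts : forall n, 0 <= ts n /\ D (flow (ts n) (xs n)) = eps /\
  forall s, 0 <= s <= ts n -> D (flow s (xs n)) <= eps.

Lemma exit_times_unbounded M : exists N, forall n, (N <= n)%nat -> M <= ts n.
Proof.
  destruct (dist_flow_small_uniform d flow Hm Hsf K1 D HD HK1 (invariant_forward flow K1 Hinv1)
    M eps Heps) as [delta [Hdelta Hsmall]].
  destruct (Hxs delta Hdelta) as [N HN]. exists N. intros n Hn.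
  apply Rnot_lt_le. intros Hlt. destruct (Hts n) as [Ht0 [Hexit _]].
  specialize (Hsmall (xs n) (ts n) (HN n Hn) ltac:(lra)). lra.
Qed.

Definition backward_point n s := flow (ts n - s) (xs n).

Lemma backward_point_Ah n s : 0 <= s -> s + h <= ts n ->
  A_h flow (fun x => D x <= eps) h (backward_point n s).
Proof.
  intros Hs Hsh. destruct (Hts n) as [Ht0 [_ Hle]]. unfold backward_point. split.
  - apply Hle. lra.
  - exists (flow (ts n - s - h) (xs n)). split; [apply Hle; lra|]. split.
    + rewrite <- (flow_add d flow Hsf) by lra. f_equal. ring.
    + intros u Hu. rewrite <- (flow_add d flow Hsf) by lra. apply Hle. lra.
Qed.

Lemma sublevel_Ah_precompact : precompact d (A_h flow (fun x => D x <= eps) h).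
Proof.
  destruct (dist_set_eq_nonempty d K1 _ _ (HD (xs 0%nat))) as [a0 Ka0].
  destruct (HAh _ (dist_sublevel_bounded d Hm K1 D HD HK1 a0 eps Ka0)) as [Hempty|Hpre];
    [exfalso|exact Hpre].
  destruct (exit_times_unbounded h) as [N HN].
  apply (Hempty (backward_point N 0)), backward_point_Ah; [lra|].
  specialize (HN N (le_n _)). lra.
Qed.

Lemma backward_point_cluster phi s : subseq phi -> 0 <= s ->
  exists psi z, subseq psi /\ seq_cvg d (fun k => backward_point (phi (psi k)) s) z.
Proof.
  intros Hphi Hs. destruct (exit_times_unbounded (s + h)) as [N HN].
  destruct (sublevel_Ah_precompact (fun k => backward_point (phi (k + N)%nat) s))
    as [psi [z [Hpsi [_ Hcv]]]].
  { intros k e He. exists (backward_point (phi (k + N)%nat) s). split.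
    - apply backward_point_Ah; [exact Hs|]. apply HN.
      pose proof (subseq_ge_id _ Hphi (k + N)%nat). lia.
    - rewrite (d_xx d Hm). exact He. }
  exists (fun k => (psi k + N)%nat), z. split; [|exact Hcv].
  intros n. specialize (Hpsi n). lia.
Qed.

Definition backward_limit (m : nat) (p : (nat -> nat) * X) : Prop :=
  subseq (fst p) /\ seq_cvg d (fun k => backward_point (fst p k) (INR m * h)) (snd p).

Lemma backward_limit_step m p : backward_limit m p ->
  exists p', backward_limit (S m) p' /\ flow h (snd p') = snd p.
Proof.
  destruct p as [phi z]. intros [Hphi Hcv]. simpl in *.
  assert (Hs : 0 <= INR (S m) * h) by (pose proof (pos_INR (S m)); nra).
  destruct (backward_point_cluster phi _ Hphi Hs) as [psi [z' [Hpsi Hcv']]].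
  exists ((fun k => phi (psi k)), z'). simpl.
  split; [split; [exact (subseq_comp phi psi Hphi Hpsi)|exact Hcv']|].
  apply (seq_cvg_unique d Hm (fun k => backward_point (phi (psi k)) (INR m * h))).
  - apply (seq_cvg_eventually_eq d
      (fun k => flow h (backward_point (phi (psi k)) (INR (S m) * h)))).
    + destruct (exit_times_unbounded (INR (S m) * h)) as [N HN]. exists N. intros n Hn.
      assert (INR (S m) * h <= ts (phi (psi n))).
      { apply HN. pose proof (subseq_ge_id _ Hpsi n). pose proof (subseq_ge_id _ Hphi (psi n)).
        lia. }
      unfold backward_point. rewrite <- (flow_add d flow Hsf) by lra.
      f_equal. rewrite S_INR. ring.
    + apply (flow_seq_cvg d flow Hm Hsf); [lra|exact Hcv'].
  - exact (seq_cvg_subseq d _ _ _ Hpsi Hcv).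
Qed.

Lemma backward_limit_sublevel m p u : backward_limit m p -> 0 <= u <= INR m * h ->
  D (flow u (snd p)) <= eps.
Proof.
  destruct p as [phi z]. intros [Hphi Hcv] Hu. simpl in *.
  destruct (exit_times_unbounded (INR m * h)) as [N HN].
  apply (mclosure_le d (fun w => D (flow u w)) _ z eps
    (dist_flow_continuous d flow Hm Hsf K1 D HD u z ltac:(lra))
    (seq_cvg_mclosure_tail d Hm _ _ N Hcv)).
  intros w [n [Hn ->]].
  assert (INR m * h <= ts (phi n)) by (apply HN; pose proof (subseq_ge_id _ Hphi n); lia).
  unfold backward_point. rewrite <- (flow_add d flow Hsf) by lra. apply Hts. lra.
Qed.

Lemma backward_limit_start p : backward_limit 0 p -> eps <= D (snd p).
Proof.
  destruct p as [phi z]. intros [_ Hcv]. simpl in *.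
  apply (mclosure_ge d D _ z eps (dist_continuous d Hm K1 D HD z)
    (seq_cvg_mclosure_tail d Hm _ _ 0 Hcv)).
  intros w [n [_ ->]]. unfold backward_point. rewrite Rmult_0_l, Rminus_0_r.
  right. symmetry. apply Hts.
Qed.

Lemma backward_chain : exists z : nat -> X, (forall m, flow h (z (S m)) = z m) /\
  (forall m u, 0 <= u <= INR m * h -> D (flow u (z m)) <= eps) /\ eps <= D (z 0%nat).
Proof.
  destruct (backward_point_cluster (fun k => k) (INR 0 * h)) as [psi [z0 [Hpsi Hcv]]];
    [intros n; lia|simpl; lra|].
  destruct (nat_dependent_choice backward_limit (fun p p' => flow h (snd p') = snd p) (psi, z0))
    as [f Hf]; [split; assumption|exact backward_limit_step|].
  exists (fun m => snd (f m)). split; [|split].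
  - intros m. exact (proj2 (Hf m)).
  - intros m u Hu. exact (backward_limit_sublevel m (f m) u (proj1 (Hf m)) Hu).
  - exact (backward_limit_start (f 0%nat) (proj1 (Hf 0%nat))).
Qed.

End BackwardPoints.

Lemma heteroclinic_of_approach (xs : nat -> X) : (forall n, 0 < D (xs n) < eps) ->
  (forall e, 0 < e -> exists N, forall n, (N <= n)%nat -> D (xs n) < e) ->
  exists psi : R -> X, complete_orbit d flow psi /\
    (forall x, alpha_limit d psi x -> K1 x) /\ (forall x, omega_limit d psi x -> K2 x).
Proof.
  intros Hpos Hsmall.
  assert (Hexit : forall n, exists tau, 0 <= tau /\ D (flow tau (xs n)) = eps /\
    forall s, 0 <= s <= tau -> D (flow s (xs n)) <= eps).
  { intros n. specialize (Hpos n). apply first_exit; [lra|].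
    intros HK. rewrite (dist_in d Hm K1 D HD _ HK) in Hpos. lra. }
  destruct (functional_choice _ Hexit) as [ts Hts].
  destruct (backward_chain xs ts Hsmall Hts) as [z [Hz [Hsub Hz0]]].
  destruct (complete_orbit_of_chain d flow Hm Hsf h Hh z Hz) as [psi [Horb Hpsi]].
  exists psi. split; [exact Horb|split].
  - apply (alpha_limit_in_K1 psi Horb). intros t Ht.
    destruct (INR_archimed h (- t) Hh) as [m Hmt]. rewrite (Hpsi t m) by lra. apply Hsub. lra.
  - apply (omega_limit_in_K2 psi Horb).
    rewrite (Hpsi 0 0%nat) by (simpl; lra). replace (0 + INR 0 * h) with 0 by (simpl; ring).
    rewrite (flow_zero d flow Hsf). intros HK. rewrite (dist_in d Hm K1 D HD _ HK) in Hz0. lra.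
Qed.

End Sublevel.

Lemma heteroclinic_orbit :
  (exists eps0, 0 < eps0 /\ forall r, 0 < r < eps0 -> exists x, dist_set_eq d x K1 r) ->
  exists psi : R -> X, complete_orbit d flow psi /\
    (forall x, alpha_limit d psi x -> K1 x) /\ (forall x, omega_limit d psi x -> K2 x).
Proof.
  intros [eps0 [Heps0 Hlevel]].
  destruct (dist_pos_on_disjoint_compact d Hm K1 D HD HK1 K2 HK2 Hdisj) as [dl [Hdl Hsep]].
  set (eps := Rmin eps0 dl / 2).
  pose proof (Rmin_l eps0 dl). pose proof (Rmin_r eps0 dl). pose proof (Rmin_pos _ _ Heps0 Hdl).
  assert (Heps : 0 < eps) by (unfold eps; lra).
  assert (Hepsdl : eps < dl) by (unfold eps; lra).
  assert (Hepseps0 : eps < eps0) by (unfold eps; lra).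
  clearbody eps.
  assert (Hr : forall n, 0 < Rmin (eps / 2) (/ (INR n + 1)) < eps /\
    Rmin (eps / 2) (/ (INR n + 1)) <= / (INR n + 1)).
  { intros n. pose proof (RinvN_pos n) as Hinv.
    pose proof (Rmin_l (eps / 2) (/ (INR n + 1))). pose proof (Rmin_r (eps / 2) (/ (INR n + 1))).
    pose proof (Rmin_pos (eps / 2) _ ltac:(lra) Hinv). lra. }
  destruct (functional_choice (fun n x => dist_set_eq d x K1 (Rmin (eps / 2) (/ (INR n + 1)))))
    as [xs Hxs].
  { intros n. apply Hlevel. specialize (Hr n). lra. }
  apply (heteroclinic_of_approach dl eps Hsep Heps Hepsdl xs).
  - intros n. rewrite (dist_unique d K1 D HD _ _ (Hxs n)). apply Hr.
  - intros e He. destruct (inv_INR_succ_small e He) as [N HN]. exists N. intros n Hn.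
    rewrite (dist_unique d K1 D HD _ _ (Hxs n)). specialize (Hr n). specialize (HN n Hn). lra.
Qed.

End Heteroclinic.

Theorem lemma4 (X : Type) (d : X -> X -> R) (S : R -> X -> X) (h : R)
  (K1 K2 : X -> Prop) :
  is_metric d -> complete_space d ->
  continuous_semiflow d S ->
  0 < h ->
  (forall A : X -> Prop, bounded_set d A ->
     (forall x, ~ A_h S A h x) \/ precompact d (A_h S A h)) ->
  seq_compact d K1 -> seq_compact d K2 ->
  invariant S K1 -> invariant S K2 ->
  (forall x, ~ (K1 x /\ K2 x)) ->
  (forall x, ~ K1 x -> dist_to_set_tends_to_0 d (fun t => S t x) K2) ->
  (exists eps0, 0 < eps0 /\ forall eps, 0 < eps < eps0 ->
     exists x, dist_set_eq d x K1 eps) ->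
  exists psi : R -> X, complete_orbit d S psi /\
    (forall x, alpha_limit d psi x -> K1 x) /\
    (forall x, omega_limit d psi x -> K2 x).
Proof.
  intros Hm _ Hsf Hh HAh HK1 HK2 Hinv1 _ Hdisj Hattr Hlevel.
  assert (HK1ne : exists a, K1 a).
  { destruct Hlevel as [eps0 [Heps0 Hlevel']]. destruct (Hlevel' (eps0 / 2)) as [x Hx]; [lra|].
    exact (dist_set_eq_nonempty d K1 x _ Hx). }
  destruct (dist_fun_exists d Hm K1 HK1ne) as [D HD].
  exact (heteroclinic_orbit d S h K1 K2 Hm Hsf Hh HAh HK1 HK2 Hinv1 Hdisj Hattr D HD Hlevel).
Qed.
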